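(* Let $p$ be a prime and $n\ge 1$, and suppose $p^n-1=st$ with positive integers $s<t$ and $\gcd(s,t)=1$. Let $\alpha$ be a generator of the multiplicative group $\mathbb{F}_{p^n}^\times$, and put $\beta=\alpha^t$, $\gamma=\alpha^s$. Let $\psi:\mathbb{F}_{p^n}\to\mathbb{F}_p$ be a fixed nonzero $\mathbb{F}_p$-linear map, and let $B=(B_{i,j})_{(i,j)\in\mathbb{Z}_s\times\mathbb{Z}_t}$ be given by $B_{i,j}=\psi(\beta^i\gamma^j)$. Then a subset $S\subset \mathbb{Z}_s\times\mathbb{Z}_t$ with $|S|=n$ is a sampling pattern if and only if it is a basis pattern.
   Context: Here $\mathbb{Z}_s=\mathbb{Z}/s\mathbb{Z}$, $\mathbb{Z}_t=\mathbb{Z}/t\mathbb{Z}$; the expression $\beta^i\gamma^j$ is well defined for $(i,j)\in\mathbb{Z}_s\times\mathbb{Z}_t$ since $\beta$ has order $s$ and $\gamma$ has order $t$, and $(i,j)\mapsto\beta^i\gamma^j$ is a bijection $\mathbb{Z}_s\times\mathbb{Z}_t\to\mathbb{F}_{p^n}^\times$. For $S\subset\mathbb{Z}_s\times\mathbb{Z}_t$, let $A|_S=\{\beta^i\gamma^j : (i,j)\in S\}\subset\mathbb{F}_{p^n}$. $S$ is a basis pattern if $A|_S$ is an $\mathbb{F}_p$-basis of $\mathbb{F}_{p^n}$. For $(a,b)\in\mathbb{Z}_s\times\mathbb{Z}_t$, the value pattern of $S$ under the shift $(a,b)$ is the vector $v_{a,b}=(B_{i+a,\,j+b})_{(i,j)\in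 S}\in\mathbb{F}_p^{S}\cong\mathbb{F}_p^n$ (indices taken mod $s$ and mod $t$). $S$ is a sampling pattern if the $p^n-1$ value patterns $v_{a,b}$, $(a,b)\in\mathbb{Z}_s\times\mathbb{Z}_t$, are pairwise distinct and are exactly the nonzero vectors of $\mathbb{F}_p^{S}$ (each occurring exactly once). *)

From HB Require Import structures.
From mathcomp Require Import all_boot all_order all_algebra all_field.
Set Implicit Arguments. Unset Strict Implicit. Unset Printing Implicit Defensive.
Import GRing.Theory.
Local Open Scope ring_scope.

(* The field F_{p^n} is modelled as a field extension L of 'F_p with
   \dim_{F_p} L = n.  Indices of Z_s x Z_t are ordinals 'I_s * 'I_t, with
   arithmetic taken mod s and mod t. *)

Section Patterns.
Variables (p s t : nat) (L : fieldExtType 'F_p).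
Variables (beta gamma : L) (psi : L -> 'F_p).

Definition Bmat (i j : nat) : 'F_p := psi (beta ^+ i * gamma ^+ j).

Definition A_on (S : {set 'I_s * 'I_t}) : seq L :=
  [seq beta ^+ (x.1 : nat) * gamma ^+ (x.2 : nat) | x : 'I_s * 'I_t <- enum S].

Definition basis_pattern (S : {set 'I_s * 'I_t}) : Prop :=
  basis_of fullv (A_on S).

Definition value_pattern (S : {set 'I_s * 'I_t}) (ab : 'I_s * 'I_t)
  : {ffun {x : 'I_s * 'I_t | x \in S} -> 'F_p} :=
  [ffun x : {x : 'I_s * 'I_t | x \in S} => Bmat (((val x).1 + ab.1) %% s) (((val x).2 + ab.2) %% t)].

Definition sampling_pattern (S : {set 'I_s * 'I_t}) : Prop :=
  injective (value_pattern S) /\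
  (forall ab, value_pattern S ab != 0) /\
  (forall w : {ffun {x : 'I_s * 'I_t | x \in S} -> 'F_p},
      w != 0 -> exists ab, value_pattern S ab = w).

End Patterns.

From HB Require Import structures.
From mathcomp Require Import all_boot all_order all_algebra all_field.
(* Write e(i, j) = beta^i gamma^j = alpha^(t i + s j).  Since s and t are
   coprime, the Chinese remainder theorem makes e a bijection from Z_s x Z_t
   onto the nonzero elements of the field, and the value pattern v_{a,b} is
   the vector (psi (e(a, b) x))_{x in A|_S}.  If A|_S is a basis, then
   d |-> (psi (d x))_{x in A|_S} is injective because psi <> 0, so the
   p^n - 1 value patterns are distinct and nonzero, hence exhaust the nonzero
   vectors of F_p^S.  Conversely, if S is a sampling pattern, every unit
   vector of F_p^S is a value pattern, i.e. of the form psi (c _) on A|_S;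
   these c form a dual family, so A|_S is free, and having n elements it is
   a basis. *)

Set Implicit Arguments.
Unset Strict Implicit.

Import GRing.Theory.
Local Open Scope ring_scope.

Lemma eqn_modMl_coprime (d k a b : nat) : coprime d k ->
  (k * a == k * b %[mod d])%N = (a == b %[mod d])%N.
Proof.
move=> co_dk; wlog le_ba : a b / (b <= a)%N => [hwlog|].
  case: (leqP b a) => [/hwlog //|/ltnW/hwlog].
  by rewrite eq_sym => ->; rewrite eq_sym.
by rewrite !eqn_mod_dvd ?leq_mul2l ?le_ba ?orbT // -mulnBr Gauss_dvdr.
Qed.

Lemma crt_index_inj (s t a a' b b' : nat) : coprime s t ->
  (a < s)%N -> (a' < s)%N -> (b < t)%N -> (b' < t)%N ->
  (t * a + s * b == t * a' + s * b' %[mod s * t])%N -> a = a' /\ b = b'.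
Proof.
move=> co_st lt_as lt_a's lt_bt lt_b't.
rewrite chinese_remainder // => /andP[eq_mod_s eq_mod_t].
move: eq_mod_s; rewrite ![(t * _ + _)%N]addnC ![(s * _)%N]mulnC !modnMDl.
rewrite eqn_modMl_coprime // !modn_small // => /eqP->.
move: eq_mod_t; rewrite ![(t * _)%N]mulnC !modnMDl.
by rewrite eqn_modMl_coprime 1?coprime_sym // !modn_small // => /eqP->.
Qed.

Section MulForm.
Variables (F : fieldType) (L : fieldExtType F) (psi : {linear L -> F^o}).

Lemma free_mul_dual (X : seq L) :
    (forall i, (i < size X)%N ->
       exists c, forall j, (j < size X)%N -> psi (c * X`_j) = (i == j)%:R) ->
  free X.
Proof.
move=> dual; apply/(@freeP _ _ _ (in_tuple X)) => k sum_kX0 i.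
have [c dual_c] := dual i (ltn_ord i).
have := congr1 (fun v => psi (c * v)) sum_kX0.
rewrite /= mulr0 linear0 mulr_sumr linear_sum (bigD1 i) //= big1 => [|j ne_ji].
  by rewrite addr0 -scalerAr linearZ /= dual_c // eqxx => <-; exact/esym/mulr1.
rewrite -scalerAr linearZ /= dual_c //.
by rewrite eq_sym (inj_eq val_inj) (negbTE ne_ji) mulr0n scaler0.
Qed.

Lemma mul_basis_form_eq0 (X : seq L) (d : L) : (exists u, psi u != 0) ->
  basis_of fullv X -> {in X, forall x, psi (d * x) = 0} -> d = 0.
Proof.
move=> [u psi_u] /andP[/eqP span_X _] dX0; apply: contraNeq psi_u => d_neq0.
have /coord_span ud_E : u / d \in <<in_tuple X>>%VS by rewrite span_X memvf.
rewrite -(divfK d_neq0 u) [_ * d]mulrC ud_E.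
rewrite mulr_sumr linear_sum big1 // => i _.
by rewrite -scalerAr linearZ /= dX0 ?mem_nth ?scaler0.
Qed.

End MulForm.

Lemma inj_setC1_onto (A B : finType) (f : A -> B) (b0 : B) :
  injective f -> (forall a, f a != b0) -> #|A| = #|B|.-1 ->
  forall b, b != b0 -> exists a, f a = b.
Proof.
move=> inj_f f_neq_b0 card_A b b_neq_b0.
have im_f : [set f a | a in A] = [set~ b0].
  apply/eqP; rewrite eqEcard cardsC1 card_imset // card_A leqnn andbT.
  by apply/subsetP => _ /imsetP[a _ ->]; rewrite in_setC1.
have : b \in [set f a | a in A] by rewrite im_f in_setC1.
by case/imsetP => a _ ->; exists a.
Qed.

Section GridPatterns.
Variables (p s t : nat) (L : fieldExtType 'F_p) (alpha : L).
Variable psi : {linear L -> ('F_p)^o}.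
Hypotheses (coprime_st : coprime s t)
           (alpha_prim : (s * t).-primitive_root alpha).

Local Notation beta := (alpha ^+ t).
Local Notation gamma := (alpha ^+ s).
Local Notation vpat := (value_pattern beta gamma psi).

Definition grid (x : 'I_s * 'I_t) : L := beta ^+ x.1 * gamma ^+ x.2.

Lemma gridE x : grid x = alpha ^+ (t * x.1 + s * x.2).
Proof. by rewrite /grid -!exprM exprD. Qed.

Lemma grid_inj : injective grid.
Proof.
move=> [a b] [a' b'] /eqP; rewrite !gridE (eq_prim_root_expr alpha_prim) /=.
case/crt_index_inj => // eq_a eq_b.
by congr (_, _); apply: val_inj.
Qed.

Lemma grid_neq0 x : grid x != 0.
Proof.
rewrite gridE expf_neq0 //; apply/eqP => alpha0.
have := prim_expr_order alpha_prim; rewrite alpha0 expr0n.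
rewrite gtn_eqF ?(prim_order_gt0 alpha_prim) // => /eqP.
by rewrite eq_sym oner_eq0.
Qed.

Lemma value_patternE (S : {set 'I_s * 'I_t}) ab :
  vpat S ab = [ffun x => psi (grid ab * grid (val x))].
Proof.
have beta_s : beta ^+ s = 1 by rewrite -exprM mulnC prim_expr_order.
have gamma_t : gamma ^+ t = 1 by rewrite -exprM prim_expr_order.
apply/ffunP => x; rewrite !ffunE /Bmat (expr_mod _ beta_s) (expr_mod _ gamma_t).
by rewrite /grid !exprD mulrACA mulrC.
Qed.

Lemma sampling_pattern_basis (S : {set 'I_s * 'I_t}) :
    #|S| = \dim (fullv : {vspace L}) ->
  sampling_pattern beta gamma psi S -> basis_pattern beta gamma S.
Proof.
move=> card_S [_ [_ vpat_onto]].
have size_A : size (A_on beta gamma S) = #|S| by rewrite size_map -cardE.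
rewrite /basis_pattern basisEfree subvf size_A card_S leqnn !andbT.
apply: (free_mul_dual (psi := psi)) => i; rewrite size_A cardE => lt_i.
have x0 : 'I_s * 'I_t by move: lt_i; case: (enum S) => [|x0 _] //; exact: x0.
have A_nth j : (j < size (enum S))%N ->
    (A_on beta gamma S)`_j = grid (nth x0 (enum S) j).
  by move=> lt_j; rewrite (nth_map x0).
have nth_S j : (j < size (enum S))%N -> nth x0 (enum S) j \in S.
  by move=> lt_j; rewrite -mem_enum mem_nth.
pose w : {ffun {x | x \in S} -> 'F_p} :=
  [ffun x => (val x == nth x0 (enum S) i)%:R].
have w_neq0 : w != 0.
  apply/eqP => /ffunP /(_ (exist (fun x => x \in S) _ (nth_S i lt_i))).
  by rewrite !ffunE eqxx; apply/eqP/oner_neq0.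
have [ab vpat_w] := vpat_onto w w_neq0.
exists (grid ab) => j lt_j.
move/ffunP: vpat_w => /(_ (exist (fun x => x \in S) _ (nth_S j lt_j))).
rewrite value_patternE !ffunE /= A_nth // => ->.
by rewrite nth_uniq ?enum_uniq // eq_sym.
Qed.

Lemma basis_pattern_sampling (S : {set 'I_s * 'I_t}) :
    prime p -> (exists u, psi u != 0) -> (s * t)%N = (p ^ #|S|).-1 ->
  basis_pattern beta gamma S -> sampling_pattern beta gamma psi S.
Proof.
move=> prime_p psi_neq0 card_grid basis_S.
have form_eq0 d : {in S, forall z, psi (d * grid z) = 0} -> d = 0.
  move=> dS0; apply: (mul_basis_form_eq0 psi_neq0 basis_S) => _ /mapP[z z_S ->].
  by apply: dS0; rewrite -mem_enum.
have vpat_inj : injective (vpat S).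
  move=> ab ab' /ffunP eq_v; apply/grid_inj/eqP; rewrite -subr_eq0.
  apply/eqP/form_eq0 => z z_S; have := eq_v (exist (fun x => x \in S) z z_S).
  by rewrite !value_patternE !ffunE mulrBl linearB /= => ->; rewrite subrr.
have vpat_neq0 ab : vpat S ab != 0.
  apply: contraNneq (grid_neq0 ab) => /ffunP v0; apply/eqP/form_eq0 => z z_S.
  by have := v0 (exist (fun x => x \in S) z z_S); rewrite value_patternE !ffunE.
split; [|split] => //; apply: inj_setC1_onto => //.
by rewrite card_prod !card_ord card_grid card_ffun card_Fp // card_sig.
Qed.

End GridPatterns.

Theorem mainTheorem1 (p n s t : nat) (L : fieldExtType 'F_p)
  (alpha : L) (psi : {linear L -> ('F_p)^o}) (S : {set 'I_s * 'I_t}) :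
  prime p -> (1 <= n)%N -> \dim (fullv : {vspace L}) = n ->
  (0 < s)%N -> (s < t)%N -> (p ^ n).-1 = (s * t)%N -> coprime s t ->
  (p ^ n).-1.-primitive_root alpha ->
  (exists x, psi x != 0) ->
  #|S| = n ->
  (sampling_pattern (alpha ^+ t) (alpha ^+ s) psi S <->
   basis_pattern (alpha ^+ t) (alpha ^+ s) S).
Proof.
move=> prime_p _ dim_L _ _ card_units coprime_st alpha_prim psi_neq0 card_S.
rewrite card_units in alpha_prim.
split; first by apply: sampling_pattern_basis; rewrite ?card_S.
by apply: basis_pattern_sampling; rewrite ?card_S.
Qed.
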